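(* Let $n>k$ be integers with $n$ odd and $k$ even, and let $\mathbf{k^n}$ denote the degree sequence $(k,k,\dots,k)$ of length $n$. Then \[\underline{\mu}(\mathbf{k^n})=\begin{cases}k & \text{if } n<2k-3,\\ k-1 & \text{if } n=2k-3,\\ k/2 & \text{if } n\ge 2k-1.\end{cases}\]
   Context: All graphs are finite and simple. For a graph $G=(V,E)$ on $n$ vertices, a fractional vertex cover is a function $f:V\to[0,\infty)$ with $f(u)+f(v)\ge 1$ for every edge $uv\in E$; $\tau^*(G)$ denotes the minimum of $\sum_{v\in V}f(v)$ over all fractional vertex covers. For $E'\subseteq E$ let $G-E'=(V,E\setminus E')$. Define $\mu(G)=\min\{|E'| : E'\subseteq E,\ \tau^*(G-E')<n/2\}$ (equivalently, the minimum number of edges whose deletion leaves no perfect 2-matching, i.e. no spanning subgraph each of whose components is a $K_2$ or an odd cycle). For a graphical degree sequence $\mathbf d$, $\underline{\mu}(\mathbf d)$ is the minimum of $\mu(G)$ over all simple graphs $G$ realizing $\mathbf d$. *)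

From mathcomp Require Import all_boot all_order all_algebra.
From mathcomp Require Import reals Rstruct.
Set Implicit Arguments. Unset Strict Implicit. Unset Printing Implicit Defensive.
Import Order.TTheory GRing.Theory Num.Theory.
Local Open Scope ring_scope.

Notation RR := Rdefinitions.R.

Definition simple_graph (n : nat) (E : {set {set 'I_n}}) : Prop :=
  forall e, e \in E -> #|e| = 2%N.

Definition deg (n : nat) (E : {set {set 'I_n}}) (v : 'I_n) : nat :=
  #|[set e in E | v \in e]|.

Definition realizes_kn (n k : nat) (E : {set {set 'I_n}}) : Prop :=
  simple_graph E /\ forall v, deg E v = k.

Definition frac_cover (n : nat) (E : {set {set 'I_n}}) (f : 'I_n -> RR) : Prop :=
  (forall v, 0 <= f v) /\
  (forall u v : 'I_n, u != v -> [set u; v] \in E -> 1 <= f u + f v).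

Definition tau_star_lt (n : nat) (E : {set {set 'I_n}}) (c : RR) : Prop :=
  exists f : 'I_n -> RR, frac_cover E f /\ \sum_(v < n) f v < c.

Definition mu_set (n : nat) (E E' : {set {set 'I_n}}) : Prop :=
  E' \subset E /\ tau_star_lt (E :\: E') (n%:R / 2).

Definition is_mu (n : nat) (E : {set {set 'I_n}}) (m : nat) : Prop :=
  (exists E', mu_set E E' /\ #|E'| = m) /\
  (forall E', mu_set E E' -> (m <= #|E'|)%N).

Definition is_mu_low (n k m : nat) : Prop :=
  (exists E : {set {set 'I_n}}, realizes_kn k E /\ is_mu E m) /\
  (forall (E : {set {set 'I_n}}) (m' : nat), realizes_kn k E -> is_mu E m' -> (m <= m')%N).

(** Fractional vertex covers are half-integral: pushing the values of a cover
    with total weight below [n/2] towards [1/2] yields an independent set [I]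
    whose neighbourhood [S] is smaller than [I].  If such a pair appears after
    deleting [E'] from a [k]-regular graph, the edges leaving [I] but missing
    [S] all lie in [E'].  Counting the [k |I|] incidences at [I] against at
    most [min (k |S|, |I| |S|)] edges into [S] and [binomial |I| 2] edges inside
    [I] bounds [|E'|] below by [k], [k - 1] or [k / 2], according to how [n]
    compares with [2 k - 3].  Circulant-type graphs attain these bounds: the
    star of a vertex in a circulant graph; a graph on [I + S] with
    [|I| = |S| + 1] whose edges inside [I] form a matching of size [k / 2];
    and, for [n = 2 k - 3], a [(k - 1)]-cycle joined completely to [k - 2]
    vertices that carry a perfect matching. *)

From mathcomp Require Import all_boot all_order all_algebra.
From mathcomp Require Import reals Rstruct.
From mathcomp Require Import lra zify.
Set Implicit Arguments. Unset Strict Implicit. Unset Printing Implicit Defensive.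
Import Order.TTheory GRing.Theory Num.Theory.

Lemma disjoint_set2 (T : finType) (x y : T) (X : {set T}) :
  [disjoint [set x; y] & X] = (x \notin X) && (y \notin X).
Proof. by rewrite disjoints_subset subUset !sub1set !inE. Qed.

Lemma card_set2I (T : finType) (x y : T) (X : {set T}) : x != y ->
  #|[set x; y] :&: X| = (x \in X) + (y \in X).
Proof.
move=> xy.
have := big_setID (aop := addn) (idx := 0) (A := [set x; y]) X (fun z => z \in X : nat).
rewrite big_setU1 /= ?inE // big_set1 => ->.
rewrite [X in _ + X]big1 ?addn0; last by move=> z; rewrite !inE => /andP[/negbTE->].
by rewrite -sum1_card; apply: eq_bigr => z; rewrite inE => /andP[_ ->].
Qed.

Lemma card_sum_mem (T : finType) (A : {set T}) (P : pred T) :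
  #|[set x in A | P x]| = \sum_(x in A) P x.
Proof.
rewrite -sum1_card (eq_bigl (fun x => (x \in A) && P x)) ?big_mkcondr => [|x]; last first.
  by rewrite inE.
by apply: eq_bigr => x _; case: (P x).
Qed.

Lemma card_set_pred (T : finType) (P : pred T) : #|[set x | P x]| = \sum_x P x.
Proof. by rewrite -sum1_card big_mkcond; apply: eq_bigr => x _; rewrite inE; case: (P x). Qed.

Lemma modn_cyclic_sub m u v : u < m -> v < m ->
  (u + m - v) %% m = if v <= u then u - v else u + m - v.
Proof.
move=> um vm; case: leqP => vu; last by rewrite modn_small; lia.
by rewrite -addnBAC // modnDr modn_small //; lia.
Qed.

Section OrdinalSums.
Variable m : nat.
Implicit Types (P : pred nat) (a b : pred nat).

Lemma sum_ord_lt p : \sum_(t < m) (t < p) = minn m p.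
Proof.
elim: m => [|m' IH]; first by rewrite big_ord0 min0n.
by rewrite big_ord_recr /= IH; case: (ltnP m' p) => h; lia.
Qed.

Lemma sum_ord_ge p : \sum_(t < m) (p <= t) = m - p.
Proof.
elim: m => [|m' IH]; first by rewrite big_ord0.
by rewrite big_ord_recr /= IH; case: (leqP p m') => h; lia.
Qed.

Lemma sum_ord_range lo hi : \sum_(t < m) (lo <= t < hi) = minn m hi - minn m lo.
Proof.
elim: m => [|m' IH]; first by rewrite big_ord0 !min0n.
by rewrite big_ord_recr /= IH; case: (leqP lo m'); case: (leqP hi m'); lia.
Qed.

Lemma sum_ord_eq (b : bool) c : \sum_(t < m) (b && (t == c :> nat)) = b && (c < m).
Proof.
case: b; last by rewrite big1.
elim: m => [|m' IH]; first by rewrite big_ord0.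
by rewrite big_ord_recr /= IH /=; case: ltngtP; lia.
Qed.

Lemma sum_orb a b : (forall t, ~~ (a t && b t)) ->
  \sum_(t < m) (a t || b t) = \sum_(t < m) a t + \sum_(t < m) b t.
Proof.
move=> ab; rewrite -big_split; apply: eq_bigr => t _.
by move: (ab t); case: (a t); case: (b t).
Qed.

Lemma sum_ord_restrict p P : p <= m -> \sum_(t < m) ((t < p) && P t) = \sum_(t < p) P t.
Proof.
move=> pm; rewrite (big_ord_widen _ (fun t => nat_of_bool (P t)) pm) [RHS]big_mkcond.
by apply: eq_bigr => t _; case: (t < p).
Qed.

Lemma sum_ord_shift p P : p <= m -> \sum_(t < m) ((p <= t) && P t) = \sum_(t < m - p) P (t + p).
Proof.
move=> pm; rewrite -(big_mkord xpredT (fun t => nat_of_bool ((p <= t) && P t))).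
rewrite -(big_mkord xpredT (fun t => nat_of_bool (P (t + p)))) (big_cat_nat (leq0n p) pm) /=.
rewrite big_nat_cond big1 => [|t /andP[/andP[_ tp] _]]; last by rewrite leqNgt tp.
rewrite -{1}[p]add0n big_addn add0n; apply: eq_bigr => t _.
by rewrite leq_addl.
Qed.

Lemma sum_ord_perm (g : nat -> nat) P : {in gtn m, forall t, g t < m} ->
  {in gtn m &, injective g} -> \sum_(t < m) P (g t) = \sum_(t < m) P t.
Proof.
move=> gm ginj; pose g' (t : 'I_m) : 'I_m := Ordinal (gm t (ltn_ord t)).
have g'inj : injective g'.
  by move=> t t' [] /(ginj _ _ (ltn_ord t) (ltn_ord t')) eq_tt'; apply: val_inj.
by rewrite [RHS](reindex_inj g'inj).
Qed.

Lemma sum_ord_rot c P : 0 < m -> \sum_(t < m) P ((t + c) %% m) = \sum_(t < m) P t.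
Proof.
move=> m_gt0; apply: (sum_ord_perm (g := fun t => (t + c) %% m)) => [t _ | t t' tm t'm /eqP].
  by rewrite ltn_pmod.
by rewrite eqn_modDr !modn_small // => /eqP.
Qed.

Lemma sum_ord_refl c P : c < m -> \sum_(t < m) P ((c + m - t) %% m) = \sum_(t < m) P t.
Proof.
move=> cm; apply: (sum_ord_perm (g := fun t => (c + m - t) %% m)) => [t _ | t t' /[!inE] tm t'm].
  by rewrite ltn_pmod //; lia.
by rewrite !modn_cyclic_sub //; case: (leqP t c); case: (leqP t' c); lia.
Qed.
End OrdinalSums.

(** * Half-integrality of fractional vertex covers *)

Definition deficient_pair (n : nat) (E : {set {set 'I_n}}) (I S : {set 'I_n}) : Prop :=
  [/\ [disjoint I & S], #|S| < #|I|
    & forall u v, u != v -> [set u; v] \in E -> u \in I -> v \in S].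

Section FractionalCovers.
Local Open Scope ring_scope.
Variables (n : nat) (E : {set {set 'I_n}}).

Lemma sum_indicator (A : {set 'I_n}) (t : RR) :
  \sum_(v < n) (if v \in A then t else 0) = t * #|A|%:R.
Proof. by rewrite -big_mkcond sumr_const mulr_natr. Qed.

Lemma deficient_tau_star_lt I S : deficient_pair E I S -> tau_star_lt E (n%:R / 2).
Proof.
case=> dIS ltSI nIS.
pose f v : RR := if v \in S then 1 else if v \in I then 0 else 1/2.
have fE v : f v = 1/2 + ((if v \in S then 1/2 else 0) - (if v \in I then 1/2 else 0)).
  rewrite /f; case: ifPn => [vS|_]; last by case: ifP; lra.
  by rewrite (disjointFl dIS vS); lra.
exists f; split; first split.
- by move=> v; rewrite fE; case: ifP; case: ifP; lra.
- move=> u v uv e; case uI: (u \in I).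
    have vS := nIS u v uv e uI.
    by rewrite /f vS uI (disjointFr dIS uI); lra.
  case vI: (v \in I).
    have uS : u \in S by apply: (nIS v u); rewrite 1?eq_sym 1?setUC.
    by rewrite /f uS vI (disjointFr dIS vI); lra.
  by rewrite /f uI vI; case: ifP; case: ifP; lra.
- rewrite (eq_bigr _ (fun v _ => fE v)) big_split /= sumrB !sum_indicator sumr_const card_ord.
  have : #|S|%:R + 1 <= #|I|%:R :> RR by rewrite natr1 ler_nat.
  rewrite -mulr_natr; lra.
Qed.

Let above_half (f : 'I_n -> RR) := [set v | 1/2 < f v].
Let below_half (f : 'I_n -> RR) := [set v | f v < 1/2].
Let off_half (f : 'I_n -> RR) := [set v | f v != 1/2].

Lemma deficient_cover_sides (f : 'I_n -> RR) : frac_cover E f ->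
  (#|above_half f| < #|below_half f|)%N ->
  deficient_pair E (below_half f) (above_half f).
Proof.
move=> [_ cov] lt; split => //.
  by rewrite disjoints_subset; apply/subsetP => v; rewrite !inE -leNgt => /ltW.
by move=> u v uv e; rewrite !inE => fu; have := cov u v uv e; lra.
Qed.

Lemma frac_cover_toward_half (f : 'I_n -> RR) (v1 : 'I_n) : frac_cover E f ->
  (#|below_half f| <= #|above_half f|)%N -> f v1 != 1/2 ->
  exists g : 'I_n -> RR, [/\ frac_cover E g, \sum_(v < n) g v <= \sum_(v < n) f v
    & off_half g \proper off_half f].
Proof.
move=> [f_ge0 cov] le_NP fv1.
have [v0 fv0 v0_min] :=
  @arg_minP _ RR _ v1 [pred v | f v != 1/2] (fun v => `|f v - 1/2|) fv1.
set t := `|f v0 - 1/2|.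
have t_gt0 : 0 < t by rewrite normr_gt0 subr_eq0.
have t_min v : f v != 1/2 -> t <= `|f v - 1/2| := v0_min v.
(* Moving every value other than [1/2] by the least distance [t] towards
   [1/2] keeps a cover and changes the total by [t (|below| - |above|)]. *)
pose g v := if 1/2 < f v then f v - t else if f v < 1/2 then f v + t else f v.
have gC v : [\/ g v = f v + t /\ f v + t <= 1/2, g v = f v - t /\ 1/2 <= f v - t
             | g v = f v /\ f v = 1/2].
  have := t_min v; rewrite /g; case: (ltgtP (f v) (1/2)) => fv /=.
  - by rewrite [`|f v - _|]ltr0_norm ?subr_lt0 // => /(_ isT) ?; apply: Or31; split; lra.
  - by rewrite [`|f v - _|]gtr0_norm ?subr_gt0 // => /(_ isT) ?; apply: Or32; split; lra.
  - by move=> _; apply: Or33.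
exists g; split.
- split=> [v | u v uv e]; first by have := f_ge0 v; case: (gC v) => -[-> ?]; lra.
  by have := cov u v uv e; case: (gC u) => -[-> ?]; case: (gC v) => -[-> ?]; lra.
- have gE v : g v = f v + ((if v \in below_half f then t else 0)
                           - (if v \in above_half f then t else 0)).
    by rewrite !inE; case: (gC v) => -[-> ?]; do 2 case: ifP; lra.
  rewrite (eq_bigr _ (fun v _ => gE v)) big_split /= sumrB !sum_indicator.
  have : t * #|below_half f|%:R <= t * #|above_half f|%:R by rewrite ler_pM2l // ler_nat.
  lra.
- apply/properP; split.
    apply/subsetP => v; rewrite !inE; apply: contraNN => /eqP fv.
    by apply/eqP; case: (gC v) => -[-> ?]; lra.
  exists v0; rewrite !inE // negbK; apply/eqP; move: fv0 => /= fv0.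
  case: (gC v0) => -[-> ?]; rewrite /t; last lra.
    by rewrite ltr0_norm ?subr_lt0; lra.
  by rewrite gtr0_norm ?subr_gt0; lra.
Qed.

Lemma tau_star_lt_deficient : tau_star_lt E (n%:R / 2) -> exists I S, deficient_pair E I S.
Proof.
move=> [f []].
have [m] := ubnP #|off_half f|; elim: m f => // m IH f lt_m cov sum_lt.
have [lt | le] := ltnP #|above_half f| #|below_half f|.
  by exists (below_half f), (above_half f); exact: deficient_cover_sides.
have [half | [v1]] := set_0Vmem (off_half f).
  suff : \sum_(v < n) f v = n%:R / 2 by lra.
  rewrite (eq_bigr (fun=> 1/2)) ?sumr_const ?card_ord; first by rewrite -mulr_natl; lra.
  by move=> v _; have := in_set0 v; rewrite -half inE => /negbFE/eqP.
rewrite inE => fv1.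
have [g [gcov le_sum lt_card]] := frac_cover_toward_half cov le fv1.
apply: (IH g) => //; last by lra.
by apply: leq_trans (proper_card lt_card) _; rewrite -ltnS.
Qed.
End FractionalCovers.

(** * The lower bound *)

Lemma sum_deg (n : nat) (E : {set {set 'I_n}}) (X : {set 'I_n}) :
  \sum_(v in X) deg E v = \sum_(e in E) #|e :&: X|.
Proof.
rewrite (eq_bigr _ (fun v _ => card_sum_mem E (fun e => v \in e))) exchange_big /=.
by apply: eq_bigr => e _; rewrite setIC -card_sum_mem; apply: eq_card => v; rewrite !inE.
Qed.

Definition crossing_edges (n : nat) (E : {set {set 'I_n}}) (I S : {set 'I_n}) :=
  [set e in E | ~~ [disjoint e & I] && ~~ [disjoint e & S]].

Definition leaving_edges (n : nat) (E : {set {set 'I_n}}) (I S : {set 'I_n}) :=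
  [set e in E | ~~ [disjoint e & I] && [disjoint e & S]].

Definition inner_edges (n : nat) (E : {set {set 'I_n}}) (I : {set 'I_n}) :=
  [set e in E | e \subset I].

Section EdgeCount.
Variables (n k : nat) (E : {set {set 'I_n}}) (I S : {set 'I_n}).
Hypotheses (Ek : realizes_kn k E) (dIS : [disjoint I & S]).

Lemma edge_set2 e : e \in E -> exists x y, x != y /\ e = [set x; y].
Proof. by case: Ek => simpleE _ /simpleE/eqP/cards2P. Qed.

Lemma sum_deg_realizes (X : {set 'I_n}) : \sum_(v in X) deg E v = k * #|X|.
Proof. by case: Ek => _ degE; rewrite (eq_bigr _ (fun v _ => degE v)) sum_nat_const mulnC. Qed.

Lemma card_incident_split :
  k * #|I| = #|crossing_edges E I S| + #|leaving_edges E I S| + #|inner_edges E I|.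
Proof.
rewrite -sum_deg_realizes sum_deg !card_sum_mem -!big_split /=.
apply: eq_bigr => e /edge_set2[x [y [xy ->]]].
rewrite card_set2I // !disjoint_set2 subUset !sub1set.
move: (disjointFr dIS (x := x)) (disjointFr dIS (x := y)).
by case: (x \in I); case: (y \in I); case: (x \in S); case: (y \in S) => // [/(_ isT)|/(_ isT)|].
Qed.

Lemma crossing_le_degS : #|crossing_edges E I S| <= k * #|S|.
Proof.
rewrite -sum_deg_realizes sum_deg card_sum_mem; apply: leq_sum => e _.
by case: andP => // -[_]; rewrite -setI_eq0 -card_gt0.
Qed.

Lemma crossing_le_pairs : #|crossing_edges E I S| <= #|I| * #|S|.
Proof.
rewrite -cardsX; apply: leq_trans (leq_imset_card (fun p => [set p.1; p.2]) _).
apply/subset_leq_card/subsetP => e; rewrite inE => /andP[/edge_set2[x [y [xy ->]]]].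
rewrite !disjoint_set2 !negb_and !negbK.
case/andP => /orP[xI | yI] /orP[xS | yS].
- by rewrite (disjointFr dIS xI) in xS.
- by apply/imsetP; exists (x, y); rewrite ?inE ?xI.
- by apply/imsetP; exists (y, x); rewrite ?inE ?yI ?xS // setUC.
- by rewrite (disjointFr dIS yI) in yS.
Qed.

Lemma inner_le_pairs : (#|inner_edges E I|).*2 <= #|I| * #|I|.-1.
Proof.
have : #|inner_edges E I| <= 'C(#|I|, 2).
  rewrite -cards_draws; apply/subset_leq_card/subsetP => e; rewrite !inE => /andP[eE ->].
  by case: Ek => simpleE _; rewrite simpleE.
by rewrite bin2 geq_half_double.
Qed.

Lemma inner_sub_leaving : inner_edges E I \subset leaving_edges E I S.
Proof.
apply/subsetP => e; rewrite !inE => /andP[eE eI]; rewrite eE /=.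
have [x [y [xy exy]]] := edge_set2 eE; move: eI; rewrite exy subUset !sub1set.
by case/andP => xI yI; rewrite !disjoint_set2 xI (disjointFr dIS xI) (disjointFr dIS yI).
Qed.

Lemma leaving_sub_deleted (E' : {set {set 'I_n}}) :
  deficient_pair (E :\: E') I S -> leaving_edges E I S \subset E'.
Proof.
case=> _ _ nIS; apply/subsetP => e; rewrite inE => /andP[eE].
have [x [y [xy exy]]] := edge_set2 eE; rewrite exy !disjoint_set2 negb_and !negbK.
case/andP => /orP[xI | yI] /andP[xS yS]; apply: contraT => e'.
- by rewrite (nIS x y) ?inE ?e' -?exy in yS.
- by rewrite (nIS y x) 1?eq_sym 1?setUC ?inE ?e' -?exy in xS.
Qed.
End EdgeCount.

Definition mu_kn (n k : nat) : nat :=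
  if n + 3 < 2 * k then k else if n + 3 == 2 * k then k.-1 else k./2.

(* [i = |I|] and [s = |S|]; [a], [b] and [c] count the crossing, leaving and
   inner edges at [I]. *)
Section LeavingEdgeCount.
Variables (k i s a b c : nat).
Hypotheses (lt_si : s < i) (degI : k * i = a + b + c) (a_le_kS : a <= k * s)
  (a_le_IS : a <= i * s) (c_le_pairs : c.*2 <= i * i.-1) (c_le_b : c <= b).

Lemma leaving_double_ge : k <= b.*2.
Proof. nia. Qed.

Lemma leaving_ge_far : s.+2 <= i -> k <= b.
Proof. nia. Qed.

Lemma leaving_ge_near : i = s.+1 -> s.+2 <= k -> k.-1 <= b.
Proof. nia. Qed.

Lemma leaving_ge_near_strict : i = s.+1 -> s.+3 <= k -> k <= b.
Proof. by move=> ei sk; subst i; nia. Qed.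

Lemma mu_kn_le_leaving n : k < n -> odd n -> ~~ odd k -> i + s <= n -> mu_kn n k <= b.
Proof.
move=> kn on ek isn; have k2 := even_halfK ek; have n2 := odd_halfK on.
have kb2 := leaving_double_ge; rewrite /mu_kn; have [far | near] := ltnP s.+1 i.
  by have := leaving_ge_far far; case: ifP => // _; case: ifP; lia.
have ei : i = s.+1 by lia.
case: ifP => [nk_lt | _]; first by apply: leaving_ge_near_strict => //; lia.
case: ifP => [/eqP nk_eq | _]; first by apply: leaving_ge_near => //; lia.
lia.
Qed.
End LeavingEdgeCount.

Lemma mu_kn_le_mu_set (n k : nat) (E E' : {set {set 'I_n}}) :
  k < n -> odd n -> ~~ odd k -> realizes_kn k E -> mu_set E E' -> mu_kn n k <= #|E'|.
Proof.
move=> kn on ek Ek [_ /tau_star_lt_deficient[I [S defIS]]].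
have [dIS ltSI _] := defIS.
have IS_le_n : #|I| + #|S| <= n.
  by rewrite -cardsUI (disjoint_setI0 dIS) cards0 addn0 -[n in _ <= n]card_ord max_card.
apply: leq_trans (subset_leq_card (leaving_sub_deleted Ek defIS)).
apply: (mu_kn_le_leaving ltSI (card_incident_split Ek dIS) (crossing_le_degS _ _ Ek)
  (crossing_le_pairs Ek dIS) (inner_le_pairs _ Ek) _) => //.
exact/subset_leq_card/(inner_sub_leaving Ek dIS).
Qed.

(** * The upper bound *)

Definition edge_set (n : nat) (r : rel nat) : {set {set 'I_n}} :=
  [set [set u; v] | u in 'I_n, v in 'I_n & r u v].

Section EdgeSet.
Variables (n : nat) (r : rel nat).
Hypotheses (r_sym : symmetric r) (r_irr : irreflexive r).

Lemma edge_setP (e : {set 'I_n}) :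
  reflect (exists u v : 'I_n, r u v /\ e = [set u; v]) (e \in edge_set n r).
Proof.
apply: (iffP imset2P) => [[u v _] | [u [v [ruv ->]]]].
  by rewrite inE => ruv ->; exists u, v.
by exists u v; rewrite ?inE.
Qed.

Lemma edge_set_simple : simple_graph (edge_set n r).
Proof.
move=> e /edge_setP[u [v [ruv ->]]]; rewrite cards2.
by case: eqP ruv => [-> | //]; rewrite r_irr.
Qed.

Lemma deg_edge_set v : deg (edge_set n r) v = \sum_(u < n) r v u.
Proof.
rewrite /deg -card_set_pred -(card_in_imset (f := fun u => [set v; u])).
  apply: eq_card => e; rewrite inE; apply/andP/imsetP.
    case=> /edge_setP[a [b [rab ->]]]; rewrite !inE => /orP[] /eqP ?; subst v.
      by exists b; rewrite ?inE.
    by exists a; rewrite ?inE 1?r_sym // setUC.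
  by case=> u; rewrite inE => rvu ->; split; [apply/edge_setP; exists v, u | rewrite !inE eqxx].
move=> a b; rewrite !inE => rva _ /setP/(_ a); rewrite !inE eqxx orbT.
by case/esym/orP => /eqP // av; rewrite av r_irr in rva.
Qed.

Lemma edge_set_realizes k :
  (forall v : 'I_n, \sum_(u < n) r v u = k) -> realizes_kn k (edge_set n r).
Proof. by move=> degk; split=> [|v]; [exact: edge_set_simple | rewrite deg_edge_set degk]. Qed.

End EdgeSet.

Lemma handshake (n : nat) (E : {set {set 'I_n}}) :
  simple_graph E -> \sum_(v < n) deg E v = (#|E|).*2.
Proof.
move=> simpleE.
have -> : \sum_(v < n) deg E v = \sum_(v in setT) deg E v by apply: eq_bigl => v; rewrite inE.
rewrite sum_deg (eq_bigr (fun=> 2)) => [|e eE]; last by rewrite setIT simpleE.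
by rewrite sum_nat_const muln2.
Qed.

Lemma inner_edge_set_sub (n : nat) (r r' : rel nat) (I : {set 'I_n}) :
  (forall u v : 'I_n, u \in I -> v \in I -> r u v -> r' u v) ->
  inner_edges (edge_set n r) I \subset edge_set n r'.
Proof.
move=> rr'; apply/subsetP => e; rewrite inE => /andP[/imset2P[u v _]].
rewrite inE => ruv ->; rewrite subUset !sub1set => /andP[uI vI].
by apply/imset2P; exists u v; rewrite ?inE ?rr'.
Qed.

Lemma mu_set_star (n : nat) (E : {set {set 'I_n}}) (v : 'I_n) :
  mu_set E [set e in E | v \in e].
Proof.
split; first by apply/subsetP => e; rewrite inE => /andP[].
apply: (deficient_tau_star_lt (I := [set v]) (S := set0)); split.
- by rewrite disjoints_subset setC0 subsetT.
- by rewrite cards0 cards1.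
- move=> a b _ /setDP[eE]; rewrite inE eE /= => nv.
  by rewrite inE => /eqP av; rewrite av !inE eqxx in nv.
Qed.

Lemma mu_set_inner (n : nat) (E : {set {set 'I_n}}) (I : {set 'I_n}) :
  #|~: I| < #|I| -> mu_set E (inner_edges E I).
Proof.
move=> ltCI; split; first by apply/subsetP => e; rewrite inE => /andP[].
apply: (deficient_tau_star_lt (I := I) (S := ~: I)); split => //.
- by rewrite disjoints_subset setCK.
- move=> a b _ /setDP[eE]; rewrite inE eE subUset !sub1set /= => nI aI.
  by rewrite inE; apply: contraNN nI => ->; rewrite aI.
Qed.

Definition symclosure (r : rel nat) : rel nat := fun u v => r u v || r v u.

Lemma symclosure_sym r : symmetric (symclosure r).
Proof. by move=> u v; rewrite /symclosure orbC. Qed.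

Lemma symclosure_irr r : irreflexive r -> irreflexive (symclosure r).
Proof. by move=> r_irr u; rewrite /symclosure orbb. Qed.

Lemma sum_symclosure n r v : (forall u, ~~ (r v u && r u v)) ->
  \sum_(u < n) symclosure r v u = \sum_(u < n) r v u + \sum_(u < n) r u v.
Proof. exact: (@sum_orb n (r v) (r^~ v)). Qed.

Definition circulant_arc (p h : nat) : rel nat :=
  fun u v => [&& u < p, v < p & 0 < (v + p - u) %% p <= h].

Definition matching_arc (a m : nat) : rel nat :=
  fun u v => (a <= u < a + m) && (v == u + m).

Definition cross_arc (p : nat) : rel nat := fun u v => (u < p) && (p <= v).

Definition shift_arc (s k : nat) : rel nat :=
  fun u v => [&& u <= s, s < v & (u + v - s) %% s.+1 < k].

Lemma circulant_arc_irr p h : irreflexive (circulant_arc p h).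
Proof. by move=> u; rewrite /circulant_arc addKn modnn !andbF. Qed.

Lemma matching_arc_irr a m : irreflexive (matching_arc a m).
Proof. by move=> u; apply/negbTE; rewrite /matching_arc; lia. Qed.

Lemma cross_arc_irr p : irreflexive (cross_arc p).
Proof. by move=> u; apply/negbTE; rewrite /cross_arc; lia. Qed.

Lemma shift_arc_irr s k : irreflexive (shift_arc s k).
Proof. by move=> u; apply/negbTE; rewrite /shift_arc; lia. Qed.

Lemma deg_circulant n p h v : p <= n -> h.*2 < p ->
  \sum_(u < n) symclosure (circulant_arc p h) v u = (v < p) * h.*2.
Proof.
move=> pn hp; have [vp | pv] := ltnP v p; last first.
  by rewrite big1 // => u _; apply/eqP; rewrite eqb0 /symclosure /circulant_arc; lia.
rewrite mul1n sum_symclosure => [|u]; last first.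
  rewrite /circulant_arc; apply/negP => /andP[/and3P[_ up +] /and3P[_ _]].
  by rewrite !modn_cyclic_sub //; case: (leqP u v); case: (leqP v u); lia.
have Q_sum : \sum_(t < p) (0 < t <= h) = h.
  by rewrite (eq_bigr (fun t : 'I_p => (1 <= t < h.+1) : nat)) // sum_ord_range; lia.
rewrite /circulant_arc vp -addnn; congr (_ + _).
  rewrite (eq_bigr (fun u : 'I_n => (u < p) && (0 < (u + (p - v)) %% p <= h) : nat)) => [|u _].
    rewrite (@sum_ord_restrict n p (fun t => 0 < (t + (p - v)) %% p <= h)) //.
    by rewrite (@sum_ord_rot p (p - v) (fun t => 0 < t <= h)) //; lia.
  by rewrite addnBA // ltnW.
rewrite (eq_bigr (fun u : 'I_n => (u < p) && (0 < (v + p - u) %% p <= h) : nat)) => [|u _].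
  rewrite (@sum_ord_restrict n p (fun t => 0 < (v + p - t) %% p <= h)) //.
  by rewrite (@sum_ord_refl p v (fun t => 0 < t <= h)).
by [].
Qed.

Lemma deg_matching n a m v : a + m.*2 <= n ->
  \sum_(u < n) symclosure (matching_arc a m) v u = (a <= v < a + m.*2).
Proof.
move=> amn; rewrite sum_symclosure => [|u]; last by rewrite /matching_arc; lia.
rewrite /matching_arc sum_ord_eq.
rewrite (eq_bigr (fun u : 'I_n => (a + m <= v < a + m.*2) && (u == v - m :> nat) : nat)) => [|u _].
  by rewrite sum_ord_eq; lia.
by congr nat_of_bool; lia.
Qed.

Lemma deg_cross n p v : p <= n ->
  \sum_(u < n) symclosure (cross_arc p) v u = if v < p then n - p else p.
Proof.
move=> pn; rewrite sum_symclosure => [|u]; last by rewrite /cross_arc; lia.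
rewrite /cross_arc; case: ltnP => vp /=.
  by rewrite [X in _ + X]big1 ?addn0 ?sum_ord_ge // => u _; rewrite andbF.
rewrite big1 // add0n (eq_bigr (fun u : 'I_n => (u < p) : nat)) => [|u _]; last by rewrite andbT.
by rewrite sum_ord_lt; apply/minn_idPr.
Qed.

Lemma deg_shift s k v : k <= s.+1 -> v < s.*2.+1 ->
  \sum_(u < s.*2.+1) symclosure (shift_arc s k) v u = if v <= s then k - (v < k) else k.
Proof.
move=> ks vn; rewrite sum_symclosure => [|u]; last by rewrite /shift_arc; lia.
have rot_sum c : \sum_(t < s.+1) ((t + c) %% s.+1 < k) = k.
  by rewrite (@sum_ord_rot s.+1 c (fun t => t < k)) // sum_ord_lt; apply/minn_idPr.
have sn : s.+1 <= s.*2.+1 by lia.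
rewrite /shift_arc; case: leqP => vs /=.
  rewrite [X in _ + X]big1 ?addn0 => [|u _]; last by rewrite andbF.
  rewrite (@sum_ord_shift _ s.+1 (fun u => (v + u - s) %% s.+1 < k) sn).
  have -> : s.*2.+1 - s.+1 = s by lia.
  rewrite (eq_bigr (fun t : 'I_s => ((bump 0 t + v) %% s.+1 < k) : nat)) => [|t _].
    by have := rot_sum v; rewrite big_ord_recl /= add0n modn_small ?ltnS //; lia.
  by have -> : v + (t + s.+1) - s = bump 0 t + v by rewrite /bump /=; lia.
rewrite big1 ?add0n => [|u _]; last by [].
rewrite (eq_bigr (fun u : 'I_s.*2.+1 => (u < s.+1) && ((u + (v - s)) %% s.+1 < k) : nat)) => [|u _].
  by rewrite (@sum_ord_restrict _ s.+1 (fun u => (u + (v - s)) %% s.+1 < k) sn) rot_sum.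
by rewrite addnBA // ltnW.
Qed.

Definition regular_mu_le (n k m : nat) : Prop :=
  exists E E' : {set {set 'I_n}}, [/\ realizes_kn k E, mu_set E E' & #|E'| <= m].

Lemma card_edge_set n (r : rel nat) : symmetric r -> irreflexive r ->
  (#|edge_set n r|).*2 = \sum_(v < n) \sum_(u < n) r v u.
Proof.
move=> r_sym r_irr; rewrite -handshake; last exact: edge_set_simple.
by apply: eq_bigr => v _; rewrite deg_edge_set.
Qed.

Lemma card_ord_lt n p : p <= n -> #|[set v : 'I_n | v < p]| = p.
Proof. by move=> pn; rewrite card_set_pred sum_ord_lt; apply/minn_idPr. Qed.

Lemma card_matching n a m : a + m.*2 <= n ->
  #|edge_set n (symclosure (matching_arc a m))| = m.
Proof.
move=> amn; apply/double_inj; rewrite card_edge_set; last exact/symclosure_irr/matching_arc_irr.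
  under eq_bigr => v _ do rewrite deg_matching //.
  by rewrite sum_ord_range; lia.
exact: symclosure_sym.
Qed.

Lemma card_circulant n p h : p <= n -> h.*2 < p ->
  #|edge_set n (symclosure (circulant_arc p h))| = p * h.
Proof.
move=> pn hp; apply/double_inj; rewrite card_edge_set; last exact/symclosure_irr/circulant_arc_irr.
  under eq_bigr => v _ do rewrite deg_circulant //.
  by rewrite -big_distrl sum_ord_lt /= (minn_idPr pn) doubleMr.
exact: symclosure_sym.
Qed.

Lemma circulant_realizes n k : k < n -> ~~ odd k ->
  realizes_kn k (edge_set n (symclosure (circulant_arc n k./2))).
Proof.
move=> kn ek; apply: edge_set_realizes => [||v]; first exact: symclosure_sym.
  exact/symclosure_irr/circulant_arc_irr.
by rewrite deg_circulant ?ltn_ord ?mul1n ?even_halfK.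
Qed.

Lemma regular_mu_le_star n k (E : {set {set 'I_n}}) (v : 'I_n) :
  realizes_kn k E -> regular_mu_le n k k.
Proof.
move=> Ek; exists E, [set e in E | v \in e]; split=> //; first exact: mu_set_star.
by case: Ek => _ /(_ v); rewrite /deg => ->.
Qed.

Lemma regular_mu_le_inner n k (r r' : rel nat) (I : {set 'I_n}) :
  realizes_kn k (edge_set n r) -> #|~: I| < #|I| ->
  (forall u v : 'I_n, u \in I -> v \in I -> r u v -> r' u v) ->
  regular_mu_le n k #|edge_set n r'|.
Proof.
move=> Ek ltCI rr'; exists (edge_set n r), (inner_edges (edge_set n r) I).
by split; [|exact: mu_set_inner | exact/subset_leq_card/inner_edge_set_sub].
Qed.

Lemma regular_mu_le_half s k : ~~ odd k -> k <= s.+1 -> regular_mu_le s.*2.+1 k k./2.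
Proof.
move=> ek ks; have k2 := even_halfK ek; set h := k./2 in k2 *.
pose r u v := symclosure (shift_arc s k) u v || symclosure (matching_arc 0 h) u v.
rewrite -(@card_matching s.*2.+1 0 h); last lia.
apply: (regular_mu_le_inner (r := r) (I := [set v : 'I_s.*2.+1 | v < s.+1])).
- apply: edge_set_realizes => [u v | u | v]; first by rewrite /r !(symclosure_sym _ u).
    by rewrite /r (symclosure_irr (@shift_arc_irr s k)) (symclosure_irr (@matching_arc_irr 0 h)).
  rewrite (@sum_orb _ (symclosure (shift_arc s k) v) (symclosure (matching_arc 0 h) v)) => [|u].
    by rewrite deg_shift // deg_matching; [case: (leqP v s); lia | lia].
  by rewrite /symclosure /shift_arc /matching_arc; lia.
- by rewrite cardsCs setCK card_ord !card_ord_lt //; lia.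
- move=> u v; rewrite !inE => uI vI.
  by case/orP => //; rewrite /symclosure /shift_arc; lia.
Qed.

Lemma regular_mu_le_cycle q : 0 < q -> regular_mu_le (q.*2.+1 + q.*2) (q.+1).*2 q.*2.+1.
Proof.
move=> q_gt0; set p := q.*2.+1; set n := p + q.*2.
pose r u v := [|| symclosure (circulant_arc p 1) u v, symclosure (cross_arc p) u v
  | symclosure (matching_arc p q) u v].
rewrite -[p]muln1 -(@card_circulant n p 1); try by rewrite /n /p; lia.
apply: (regular_mu_le_inner (r := r) (I := [set v : 'I_n | v < p])).
- apply: edge_set_realizes => [u v | u | v]; first by rewrite /r !(symclosure_sym _ u).
    by rewrite /r (symclosure_irr (@circulant_arc_irr p 1))
      (symclosure_irr (@cross_arc_irr p)) (symclosure_irr (@matching_arc_irr p q)).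
  rewrite /r (@sum_orb _ (symclosure (circulant_arc p 1) v)
    (fun u => symclosure (cross_arc p) v u || symclosure (matching_arc p q) v u)) => [|u].
    rewrite (@sum_orb _ (symclosure (cross_arc p) v) (symclosure (matching_arc p q) v)) => [|u].
      rewrite deg_circulant ?deg_cross ?deg_matching /n /p; try lia.
      by case: (ltnP v q.*2.+1); have := ltn_ord v; rewrite /n /p; lia.
    by rewrite /symclosure /cross_arc /matching_arc; lia.
  by rewrite /symclosure /circulant_arc /cross_arc /matching_arc; lia.
- by rewrite cardsCs setCK card_ord !card_ord_lt /n /p //; lia.
- move=> u v; rewrite !inE => uI vI.
  by rewrite /r; case/or3P => //; rewrite /symclosure /cross_arc /matching_arc; lia.
Qed.

Lemma regular_mu_le_mu_kn n k : k < n -> odd n -> ~~ odd k -> regular_mu_le n k (mu_kn n k).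
Proof.
move=> kn on ek; have k2 := even_halfK ek; have n2 := odd_halfK on.
rewrite /mu_kn; case: ifP => [_ | /negbT nk_lt].
  exact: (regular_mu_le_star (Ordinal kn) (circulant_realizes kn ek)).
case: ifP => [/eqP nk_eq | /negbT nk_neq].
  have -> : k = (k./2).-1.+1.*2 by lia.
  have -> : n = (k./2).-1.*2.+1 + (k./2).-1.*2 by lia.
  by rewrite doubleS; apply: regular_mu_le_cycle; lia.
have -> : n = (n./2).*2.+1 by lia.
by apply: regular_mu_le_half => //; lia.
Qed.

Theorem theorem26 (n k : nat) :
  (k < n)%N -> odd n -> ~~ odd k ->
  is_mu_low n k
    (if (n + 3 < 2 * k)%N then k
     else if (n + 3 == 2 * k)%N then k.-1
     else k./2).
Proof.
move=> kn on ek; change (is_mu_low n k (mu_kn n k)).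
have mu_kn_le E E' := @mu_kn_le_mu_set n k E E' kn on ek.
have [E [E' [Ek muE' cardE']]] := regular_mu_le_mu_kn kn on ek.
split=> [|E0 m Ek0 [[E1 [mu1 <-]] _]]; last exact: mu_kn_le Ek0 mu1.
exists E; split=> //; split=> [|E'' /(mu_kn_le _ _ Ek) //].
by exists E'; split=> //; apply/eqP; rewrite eqn_leq cardE' (mu_kn_le _ _ Ek muE').
Qed.
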